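(* Let $X_1, \ldots, X_m$ be nonempty pairwise disjoint subsets of $A$, let $A' = \bigcup_{i=1}^m X_i$, and suppose that for every $1 \le i \le m$, $\left(\bigcup_{k=1}^{i-1} X_k\right) \leadsto X_i$. Then for every $S' \subseteq S$, $$\Psi_{A'}(S') = (\Psi_{X_1} \oslash \cdots \oslash \Psi_{X_m})\big(\Omega_{A'}(S')\big).$$
   Context: Let $A$ be a finite set of agents. For each $a \in A$ let $S_a$ be a nonempty finite set, and $S = \prod_{a \in A} S_a$ the set of states. For each $a \in A$ let $\to_a \subseteq S \times S$ be a relation that is either empty or left-total, such that whenever $s \to_a s'$, either $s = s'$ or $s$ and $s'$ differ only in the $a$-component. For $X \subseteq A$ let $\to_X = \bigcup_{a \in X} \to_a$ (so $\to_\emptyset$ is empty) and $\to_X^*$ its reflexive-transitive closure; for $T \subseteq S$, $(T \to_X) = \{ t' : \exists t \in T,\ t \to_X t'\}$. Orbit operator: $\Omega_X(S') = \{ s' : \exists s \in S',\ s \to_X^* s'\}$. Equilibria operator: $\Psi_X(S') = \{ s \in \Omega_X(S') : \forall s' \in S,\ s \to_X^* s' \implies s' \to_X^* s \}$. $M$-relation: $X \leadsto Y$ iff for every $S' \subseteq S$, with $T = \Psi_X(\Psi_{X \cup Y}(S'))$, one has $(T \to_Y) \subseteq T$. For $X, Y \subseteq A$: let $\rightleftharpoons_X$ be the equivalence on $S$ with $s \rightleftharpoons_X s'$ iff $s \to_X^* s'$ and $s' \to_X^* s$; $[s]_X$ is the class of $s$ and $[S'']_X = \{[s]_X : s \in S''\}$.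 On classes, $c \Rightarrow_Y c'$ iff there exist $s \in c$, $s' \in c'$ with $s \to_Y s'$; $\Rightarrow_Y^*$ is its reflexive-transitive closure. For $S'' \subseteq S$, $[\widetilde{\Psi}_Y]_X(S'') = \{ e \in [S'']_X : \{e' : e \Rightarrow_Y^* e'\} \subseteq [S'']_X \text{ and } \forall e' \in [S]_X,\ e \Rightarrow_Y^* e' \implies e' \Rightarrow_Y^* e \}$, and $\mathsf{Flatten}(E) = \bigcup_{e \in E} e$ for a set $E$ of subsets of $S$. The iterated composition is defined recursively: $F_1 = \Psi_{X_1}$ and, for $2 \le k \le m$, $F_k(S'') = \mathsf{Flatten}\big([\widetilde{\Psi}_{X_k}]_{Y_{k-1}}(F_{k-1}(S''))\big)$ where $Y_{k-1} = X_1 \cup \cdots \cup X_{k-1}$; then $\Psi_{X_1} \oslash \cdots \oslash \Psi_{X_m} = F_m$. *)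

From mathcomp Require Import all_boot.
Set Implicit Arguments. Unset Strict Implicit. Unset Printing Implicit Defensive.

Section Defs.
Variable A : finType.
Variable Sa : A -> finType.

Definition St := {dffun forall a : A, Sa a}.

Variable R : forall a : A, rel St.

Definition stepX (X : {set A}) : rel St := fun s s' => [exists a in X, R a s s'].

Definition reach (X : {set A}) : rel St := connect (stepX X).

Definition Omega (X : {set A}) (S' : {set St}) : {set St} :=
  [set s' | [exists s in S', reach X s s']].

Definition Psi (X : {set A}) (S' : {set St}) : {set St} :=
  [set s in Omega X S' | [forall s', reach X s s' ==> reach X s' s]].

Definition imgstep (Y : {set A}) (T : {set St}) : {set St} :=
  [set t' | [exists t in T, stepX Y t t']].

Definition Mrel (X Y : {set A}) : Prop :=
  forall S' : {set St}, let T := Psi X (Psi (X :|: Y) S') in imgstep Y T \subset T.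

Definition cls (X : {set A}) (s : St) : {set St} :=
  [set s' | reach X s s' && reach X s' s].

Definition clsset (X : {set A}) (S'' : {set St}) : {set {set St}} :=
  [set cls X s | s in S''].

Definition cstep (X Y : {set A}) : rel {set St} := fun c c' =>
  [&& c \in clsset X setT, c' \in clsset X setT &
      [exists s in c, exists s' in c', stepX Y s s']].

Definition creach (X Y : {set A}) : rel {set St} := connect (cstep X Y).

Definition tPsi (Y X : {set A}) (S'' : {set St}) : {set {set St}} :=
  [set e in clsset X S'' |
     [forall e', creach X Y e e' ==> (e' \in clsset X S'')] &&
     [forall e' in clsset X setT, creach X Y e e' ==> creach X Y e' e]].

Definition Flatten (E : {set {set St}}) : {set St} := \bigcup_(e in E) e.

(* F_k for k >= 2, given Y = Y_{k-1}, remaining list [X_k; ...; X_m] and current F_{k-1}(S'') *)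
Fixpoint compAux (Y : {set A}) (Xs : seq {set A}) (cur : {set St}) : {set St} :=
  match Xs with
  | [::] => cur
  | X :: r => compAux (Y :|: X) r (Flatten (tPsi X Y cur))
  end.

Definition compPsi (Xs : seq {set A}) (S'' : {set St}) : {set St} :=
  match Xs with
  | [::] => S''  (* not used: the statement requires m >= 1 *)
  | X1 :: r => compAux X1 r (Psi X1 S'')
  end.

End Defs.

From mathcomp Require Import all_boot.

Set Implicit Arguments. Unset Strict Implicit. Unset Printing Implicit Defensive.

(* Induction on m, with Y = X_1 ∪ ... ∪ X_(k-1) and Ω = Ω_(A')(S'), which is
   closed under ->_(A'). The inductive step is: if Ω is closed under ->_(Y∪X)
   and Y ⇝ X, then Flatten([Ψ̃_X]_Y(Ψ_Y Ω)) = Ψ_(Y∪X) Ω.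
   First, Y ⇝ X makes every (Y∪X)-recurrent state of Ω Y-recurrent: from such
   an s descend by ->_Y to a Y-recurrent t; the set Ψ_Y(Ψ_(Y∪X) Ω) contains t
   and is closed under ->_Y and (by Y ⇝ X) under ->_X, so it contains s.
   On Y-recurrent states a ->_Y step never leaves the Y-class, so (Y∪X)-paths
   through Y-recurrent states project to =>_X-paths between Y-classes, and
   =>_X-paths always lift to (Y∪X)-paths. Hence s is (Y∪X)-recurrent iff its
   class lies in Ψ_Y Ω, only reaches classes of Ψ_Y Ω, and is =>_X-recurrent. *)

Lemma connect_forward_closed (T : finType) (e : rel T) (W : {set T}) x y :
  (forall u v, u \in W -> e u v -> v \in W) -> x \in W -> connect e x y -> y \in W.
Proof.
move=> eW xW /connectP[p + ->]; elim: p x xW => //= z p IH x xW /andP[exz pz].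
exact: IH (eW _ _ xW exz) pz.
Qed.

Lemma connect_to_terminal (T : finType) (e : rel T) s :
  exists2 t, connect e s t & forall u, connect e t u -> connect e u t.
Proof.
have [t st tmin] := arg_minnP (fun t => #|[set u | connect e t u]|) (connect0 e s).
exists t => // u tu.
have sub : [set w | connect e u w] \subset [set w | connect e t w].
  by apply/subsetP => w; rewrite !inE; apply: connect_trans tu.
have /eqP eq_reach : [set w | connect e u w] == [set w | connect e t w].
  by rewrite eqEcard sub tmin //; apply: connect_trans st tu.
have : t \in [set w | connect e t w] by rewrite inE.
by rewrite -eq_reach inE.
Qed.

Section Equilibria.
Variables (A : finType) (Sa : A -> finType) (R : forall a : A, rel (St Sa)).
Implicit Types (X Y Z W : {set A}) (Om : {set St Sa}) (s t u v : St Sa).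

Local Notation reach := (reach R).
Local Notation cls := (cls R).

Definition recurrent X s := [forall s', reach X s s' ==> reach X s' s].

Definition reach_closed Z Om := forall s t, s \in Om -> reach Z s t -> t \in Om.

Lemma reach_refl X s : reach X s s.
Proof. exact: connect0. Qed.

Lemma recurrentP X s : reflect (forall t, reach X s t -> reach X t s) (recurrent X s).
Proof.
by apply: (iffP forallP) => H t; [move/(implyP (H t)) | apply/implyP/H].
Qed.

Lemma recurrent_reach X s t : recurrent X s -> reach X s t -> recurrent X t.
Proof.
move=> /recurrentP srec st; apply/recurrentP => u tu.
exact: connect_trans (srec _ (connect_trans st tu)) st.
Qed.

Lemma stepXU Y X s t : stepX R (Y :|: X) s t = stepX R Y s t || stepX R X s t.
Proof.
apply/existsP/orP => [[a /andP[]]|[|]/existsP[a /andP[aZ st]]].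
  by rewrite inE => /orP[] aZ st; [left|right]; apply/existsP; exists a; rewrite aZ.
- by exists a; rewrite inE aZ.
- by exists a; rewrite inE aZ orbT.
Qed.

Lemma reach_subset Y Z s t : Y \subset Z -> reach Y s t -> reach Z s t.
Proof.
move=> YZ; apply: connect_sub => u v /existsP[a /andP[aY uv]].
by apply: connect1; apply/existsP; exists a; rewrite (subsetP YZ).
Qed.

Lemma reach_closed_subset Y Z Om : Y \subset Z -> reach_closed Z Om -> reach_closed Y Om.
Proof. by move=> YZ Omc s t sOm /(reach_subset YZ); apply: Omc. Qed.

Lemma Omega_reach_closed W (S' : {set St Sa}) : reach_closed W (Omega R W S').
Proof.
move=> s t; rewrite !inE => /exists_inP[x xS xs] st.
by apply/exists_inP; exists x; last exact: connect_trans xs st.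
Qed.

Lemma Omega_id W Om : reach_closed W Om -> Omega R W Om = Om.
Proof.
move=> Omc; apply/setP => s; rewrite inE; apply/exists_inP/idP => [[x]|sOm].
  exact: Omc.
by exists s; rewrite ?reach_refl.
Qed.

Lemma Psi_Omega W (S' : {set St Sa}) : Psi R W (Omega R W S') = Psi R W S'.
Proof. by rewrite /Psi Omega_id //; apply: Omega_reach_closed. Qed.

Lemma in_Psi W (S' : {set St Sa}) s :
  (s \in Psi R W S') = (s \in Omega R W S') && recurrent W s.
Proof. by rewrite inE. Qed.

Lemma in_Psi_closed W Om s :
  reach_closed W Om -> (s \in Psi R W Om) = (s \in Om) && recurrent W s.
Proof. by move=> Omc; rewrite in_Psi Omega_id. Qed.

Lemma Psi_reach_closed W (S' : {set St Sa}) : reach_closed W (Psi R W S').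
Proof.
move=> s t; rewrite !in_Psi => /andP[sO srec] st.
by rewrite (Omega_reach_closed sO st) (recurrent_reach srec st).
Qed.

Lemma in_cls Y p s : (s \in cls Y p) = reach Y p s && reach Y s p.
Proof. by rewrite inE. Qed.

Lemma cls_refl Y s : s \in cls Y s.
Proof. by rewrite in_cls reach_refl. Qed.

Lemma cls_eq Y u v : reach Y u v -> reach Y v u -> cls Y u = cls Y v.
Proof.
move=> uv vu; apply/setP => w; rewrite !in_cls.
apply/andP/andP => -[pw wp].
  by split; [apply: connect_trans vu pw | apply: connect_trans wp uv].
by split; [apply: connect_trans uv pw | apply: connect_trans wp vu].
Qed.

Lemma cls_step_recurrent Y u v : recurrent Y u -> stepX R Y u v -> cls Y v = cls Y u.
Proof. by move=> /recurrentP urec /connect1 uv; apply: cls_eq (urec _ uv) uv. Qed.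

Lemma cls_in_clsset Y s : cls Y s \in clsset R Y setT.
Proof. by apply: imset_f; rewrite inE. Qed.

Lemma cstep_cls Y X u v : stepX R X u v -> cstep R Y X (cls Y u) (cls Y v).
Proof.
move=> uv; rewrite /cstep !cls_in_clsset /=.
by apply/exists_inP; exists u; rewrite ?cls_refl //; apply/exists_inP; exists v; rewrite ?cls_refl.
Qed.

Lemma cls_mem_eq Y p s : s \in cls Y p -> cls Y p = cls Y s.
Proof. by rewrite in_cls => /andP[]; apply: cls_eq. Qed.

Lemma creach_cls_reach Y X s c :
  creach R Y X (cls Y s) c -> exists2 t, c = cls Y t & reach (Y :|: X) s t.
Proof.
pose V := [set c | [exists t, (c == cls Y t) && reach (Y :|: X) s t]].
suff /[apply] : forall c, creach R Y X (cls Y s) c -> c \in V.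
  by rewrite inE => /existsP[t /andP[/eqP -> st]]; exists t.
move=> c0; apply: connect_forward_closed; last first.
  by rewrite inE; apply/existsP; exists s; rewrite eqxx reach_refl.
move=> c1 c2; rewrite !inE => /existsP[t /andP[/eqP -> st]].
case/and3P => _ /imsetP[w _ ->] /exists_inP[a ta /exists_inP[b bw ab]].
apply/existsP; exists b; rewrite (cls_mem_eq bw) eqxx /=.
move: ta; rewrite in_cls => /andP[ta _].
apply: connect_trans st (connect_trans (reach_subset (subsetUl _ _) ta) _).
by apply: connect1; rewrite stepXU ab orbT.
Qed.

Lemma creach_reach Y X u v : creach R Y X (cls Y u) (cls Y v) -> reach (Y :|: X) u v.
Proof.
case/creach_cls_reach => t eq_vt ut.
have := cls_refl Y v; rewrite eq_vt in_cls => /andP[tv _].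
exact: connect_trans ut (reach_subset (subsetUl _ _) tv).
Qed.

Lemma reach_creach Y X (W : {set St Sa}) s t :
  {in W, forall u, recurrent Y u} ->
  (forall u v, u \in W -> creach R Y X (cls Y s) (cls Y u) ->
     stepX R (Y :|: X) u v -> v \in W) ->
  s \in W -> reach (Y :|: X) s t -> creach R Y X (cls Y s) (cls Y t).
Proof.
move=> Wrec Wcl sW st.
pose V := [set w | (w \in W) && creach R Y X (cls Y s) (cls Y w)].
suff : t \in V by rewrite inE => /andP[].
apply: connect_forward_closed st; last by rewrite inE sW; apply: connect0.
move=> u v; rewrite !inE => /andP[uW su] uv; rewrite (Wcl u v) //=.
move: uv; rewrite stepXU => /orP[uYv|uXv].
  by rewrite (cls_step_recurrent (Wrec _ uW) uYv).
exact: connect_trans su (connect1 (cstep_cls _ uXv)).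
Qed.

Section Step.
Variables (Y X : {set A}) (Om : {set St Sa}).
Hypothesis Omc : reach_closed (Y :|: X) Om.

Local Notation P := (Psi R Y Om).
Local Notation Q := (Psi R (Y :|: X) Om).

Lemma Psi_setU_subset : Mrel R Y X -> Q \subset P.
Proof.
move=> YX; apply/subsetP => s sQ.
have OmY := reach_closed_subset (subsetUl Y X) Omc.
have [t st /recurrentP trec] := connect_to_terminal (stepX R Y) s.
pose T := Psi R Y Q.
have tT : t \in T.
  rewrite in_Psi trec andbT inE; apply/exists_inP; exists t; last exact: reach_refl.
  exact: Psi_reach_closed sQ (reach_subset (subsetUl _ _) st).
have ts : reach (Y :|: X) t s.
  move: sQ; rewrite in_Psi_closed // => /andP[_ /recurrentP]; apply.
  exact: reach_subset (subsetUl _ _) st.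
have : s \in T.
  apply: connect_forward_closed tT ts => u v uT; rewrite stepXU => /orP[uv|uv].
    exact: Psi_reach_closed uT (connect1 uv).
  by apply: (subsetP (YX Om)); rewrite inE; apply/exists_inP; exists u.
rewrite in_Psi => /andP[_ srec]; rewrite in_Psi_closed // srec andbT.
by move: sQ; rewrite in_Psi_closed // => /andP[].
Qed.

Lemma Flatten_tPsi_subset : Flatten (tPsi R X Y P) \subset Q.
Proof.
apply/subsetP => s /bigcupP[e]; rewrite [e \in _]inE.
move=> /andP[/imsetP[p pP ->] /andP[/forallP sub_P /forall_inP rec_cls]] sp.
rewrite (cls_mem_eq sp) in sub_P rec_cls.
have sP : s \in P by apply: Psi_reach_closed pP _; move: sp; rewrite in_cls => /andP[].
have OmY := reach_closed_subset (subsetUl Y X) Omc.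
move: (sP); rewrite (in_Psi_closed _ Omc) (in_Psi_closed _ OmY) => /andP[-> _] /=.
apply/recurrentP => t st; apply: creach_reach.
have /implyP := rec_cls _ (cls_in_clsset Y t); apply.
apply: (reach_creach (W := P)) st => // [u|u v uP su].
  by rewrite in_Psi => /andP[].
rewrite stepXU => /orP[uv|uv]; first exact: Psi_reach_closed uP (connect1 uv).
have /imsetP[p' p'P eq_v] := implyP (sub_P _) (connect_trans su (connect1 (cstep_cls Y uv))).
have := cls_refl Y v; rewrite eq_v in_cls => /andP[p'v _].
exact: Psi_reach_closed p'P p'v.
Qed.

Lemma subset_Flatten_tPsi : Mrel R Y X -> Q \subset Flatten (tPsi R X Y P).
Proof.
move=> /Psi_setU_subset QP; apply/subsetP => s sQ.
apply/bigcupP; exists (cls Y s); last exact: cls_refl.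
rewrite inE imset_f ?(subsetP QP) //=; apply/andP; split.
  apply/forallP => e; apply/implyP => /creach_cls_reach[t -> st].
  by apply: imset_f; apply: (subsetP QP); apply: Psi_reach_closed sQ st.
apply/forall_inP => e _; apply/implyP => /creach_cls_reach[t -> st].
apply: (reach_creach (W := Q)).
- by move=> u /(subsetP QP); rewrite in_Psi => /andP[].
- by move=> u v uQ _ /connect1; apply: Psi_reach_closed uQ.
- exact: Psi_reach_closed sQ st.
- by move: sQ; rewrite in_Psi => /andP[_ /recurrentP]; apply.
Qed.

Lemma Flatten_tPsi_Psi : Mrel R Y X -> Flatten (tPsi R X Y P) = Q.
Proof.
by move=> YX; apply/eqP; rewrite eqEsubset Flatten_tPsi_subset subset_Flatten_tPsi.
Qed.

End Step.

Lemma compAux_Psi (r : seq {set A}) Y Om :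
  reach_closed (Y :|: \bigcup_(X <- r) X) Om ->
  (forall i, i < size r -> Mrel R (Y :|: \bigcup_(X <- take i r) X) (nth set0 r i)) ->
  compAux R Y r (Psi R Y Om) = Psi R (Y :|: \bigcup_(X <- r) X) Om.
Proof.
elim: r Y => [|X r IH] Y Omc YM /=; first by rewrite big_nil setU0.
rewrite big_cons setUA in Omc *.
have YX : Mrel R Y X by have := YM 0 isT; rewrite big_nil setU0.
rewrite Flatten_tPsi_Psi //; last exact: reach_closed_subset (subsetUl _ _) Omc.
by apply: IH => // i ir; have := YM i.+1 ir; rewrite /= big_cons setUA.
Qed.

End Equilibria.

Theorem theorem2 (A : finType) (Sa : A -> finType)
  (hSa : forall a : A, 0 < #|Sa a|)
  (R : forall a : A, rel (St Sa))
  (hR : forall a : A, (forall s s', ~~ R a s s') \/ (forall s, exists s', R a s s'))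
  (hloc : forall (a : A) (s s' : St Sa), R a s s' ->
            s = s' \/ (forall b : A, b != a -> s b = s' b))
  (Xs : seq {set A})
  (hm : 0 < size Xs)
  (hne : forall i, i < size Xs -> nth set0 Xs i != set0)
  (hdisj : forall i j, i < j -> j < size Xs ->
            [disjoint nth set0 Xs i & nth set0 Xs j])
  (hM : forall i, i < size Xs ->
          Mrel R (\bigcup_(X <- take i Xs) X) (nth set0 Xs i))
  (S' : {set St Sa}) :
  Psi R (\bigcup_(X <- Xs) X) S' =
  compPsi R Xs (Omega R (\bigcup_(X <- Xs) X) S').
Proof.
case: Xs hm hM hne hdisj => [//|X1 r] _ hM _ _ /=.
rewrite big_cons compAux_Psi ?Psi_Omega //; first exact: Omega_reach_closed.
by move=> i ir; have := hM i.+1 ir; rewrite /= big_cons.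
Qed.
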